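(* If $T$ is the modular tree of a finite graph $X$, then ${\rm Aut}(X)\cong{\rm Aut}(T)$, where ${\rm Aut}(T)$ consists of the automorphisms of $T$ that preserve the types of vertices (normal/marker) and of edges (normal/tree) and the orientation of tree edges.
   Context: A module of a graph $X$ is a set $M\subseteq V(X)$ such that every $x\in V(X)\setminus M$ is adjacent either to all vertices of $M$ or to none. A module is trivial if it equals $V(X)$ or has size $1$; a graph is prime if all its modules are trivial, and degenerate if it is $K_n$ or $\overline{K_n}$. Two disjoint modules are adjacent if all edges between them are present. For a modular partition $\mathcal P=\{M_1,\dots,M_k\}$ of $V(X)$, the quotient $X/\mathcal P$ has vertices $m_1,\dots,m_k$ with $m_im_j$ an edge iff $M_i,M_j$ are adjacent. Modular decomposition: if $X$ is prime or degenerate, stop; if $X$ and $\overline X$ are connected, use the partition into inclusion-maximal proper modules; if $X$ is disconnected (and $\overline X$ connected), use the connected components of $X$; if $\overline X$ is disconnected (and $X$ connected), use the connected components of $\overline X$; recurse on each part. The modular tree $T$ (with normal and marker vertices, normal edges and directed tree edges, and a root node) is defined recursively: if $X$ is prime or degenerate, $T=X$ is its own root node. Otherwise, with $\mathcal P=\{M_1,\dots,M_k\}$ the partition used and $T_i$ the modular tree of $X[M_i]$, $T$ is the disjoint union of the $T_i$ and of the quotient $X/\mathcal P$ (the root node, with marker vertices $m_1,\dots,m_k$); to each $T_i$ a new marker vertex $m_i'$ adjacent exactly to the root node of $T_i$ is added, together with a tree edge oriented from $m_i$ to $m_i'$. *)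

From HB Require Import structures.
From mathcomp Require Import all_boot all_order all_fingroup.
Set Implicit Arguments. Unset Strict Implicit. Unset Printing Implicit Defensive.

Section ModularTree.
Variables (V : finType) (e : rel V).

Definition is_module (A M : {set V}) : bool :=
  [&& M \subset A, M != set0 &
   [forall x in A :\: M, [forall y in M, e x y] || [forall y in M, ~~ e x y]]].

Definition trivial_module (A M : {set V}) : bool := (M == A) || (#|M| == 1).

Definition is_prime (A : {set V}) : bool :=
  [forall M : {set V}, is_module A M ==> trivial_module A M].

Definition is_degenerate (A : {set V}) : bool :=
  [forall x in A, forall y in A, (x != y) ==> e x y] ||
  [forall x in A, forall y in A, ~~ e x y].

Definition adjA (A : {set V}) : rel V := fun x y => [&& x \in A, y \in A & e x y].
Definition coadjA (A : {set V}) : rel V :=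
  fun x y => [&& x \in A, y \in A, x != y & ~~ e x y].

Definition rconnected (A : {set V}) (r : rel V) : bool :=
  [forall x in A, forall y in A, connect r x y].

Definition rcomponents (A : {set V}) (r : rel V) : {set {set V}} :=
  [set [set y in A | connect r x y] | x in A].

Definition proper_module (A M : {set V}) : bool := is_module A M && (M != A).

Definition max_proper_modules (A : {set V}) : {set {set V}} :=
  [set M | proper_module A M &&
           [forall N : {set V}, (proper_module A N && (M \subset N)) ==> (N == M)]].

Definition children (A : {set V}) : {set {set V}} :=
  if is_prime A || is_degenerate A then set0
  else if rconnected A (adjA A) && rconnected A (coadjA A) then max_proper_modules A
  else if ~~ rconnected A (adjA A) then rcomponents A (adjA A)
  else rcomponents A (coadjA A).

Definition nodes : {set {set V}} :=
  fixset (fun S : {set {set V}} => setT |: \bigcup_(A in S) children A).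

Definition is_leaf (A : {set V}) : bool := children A == set0.

(* Vertices of the modular tree T:
   inl v       : the normal vertex v of X;
   inr (M,false): the marker vertex m_M in the node of the parent of M;
   inr (M,true) : the marker vertex m_M' in the root node of T_M.
   (for every non-root node M) *)
Definition tvalid (t : V + ({set V} * bool)) : bool :=
  match t with
  | inl _ => true
  | inr (M, _) => (M \in nodes) && (M != setT)
  end.

Definition tvert := {t : V + ({set V} * bool) | tvalid t}.

Definition is_normal (t : tvert) : bool := if val t is inl _ then true else false.

Definition adjacent_modules (M N : {set V}) : bool :=
  [forall x in M, forall y in N, e x y].

Definition nedge_raw (s t : V + ({set V} * bool)) : bool :=
  match s, t with
  | inl u, inl v =>
      e u v && [exists L in nodes, [&& is_leaf L, u \in L & v \in L]]
  | inl v, inr (M, true) | inr (M, true), inl v => is_leaf M && (v \in M)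
  | inr (Mi, false), inr (Mj, false) =>
      [&& Mi != Mj, [exists A in nodes, (Mi \in children A) && (Mj \in children A)]
        & adjacent_modules Mi Mj]
  | inr (Mi, false), inr (M, true) | inr (M, true), inr (Mi, false) =>
      Mi \in children M
  | _, _ => false
  end.

Definition tnedge : rel tvert := fun s t => nedge_raw (val s) (val t).

Definition ttedge : rel tvert := fun s t =>
  match val s, val t with
  | inr (M, false), inr (N, true) => M == N
  | _, _ => false
  end.

Definition AutX : {set {perm V}} :=
  [set p : {perm V} | [forall x, forall y, e (p x) (p y) == e x y]].

Definition AutT : {set {perm tvert}} :=
  [set p : {perm tvert} | [forall s, is_normal (p s) == is_normal s] &&
     [forall s, forall t, (tnedge (p s) (p t) == tnedge s t) &&
                          (ttedge (p s) (p t) == ttedge s t)]].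

End ModularTree.

From HB Require Import structures.
From mathcomp Require Import all_boot all_order all_fingroup.
Set Implicit Arguments. Unset Strict Implicit. Unset Printing Implicit Defensive.

(* A graph automorphism s maps modules to modules and commutes with every step
   of the decomposition, so it permutes the nodes by M |-> s M and induces an
   automorphism of T (v |-> s v, m_M |-> m_(s M)); this is a morphism.
   Conversely an automorphism p of T permutes the normal vertices, which gives
   a permutation s of V.  By induction on |M|, p maps m_M' to m_(s M)': the
   tree edge pairs m_M' with m_M, and the neighbours of m_M' are the markers of
   the children of M or, for a leaf, the vertices of M, and they determine M.
   An edge xy of X lies either inside a leaf, where it is a normal edge of T,
   or between two distinct parts C, D of some node; the parts are disjoint
   modules (for maximal proper modules this is Gallai's theorem), so C and D
   are adjacent and m_C m_D is a normal edge.  Hence s preserves edges and p is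
   the automorphism induced by s. *)

Section PermImage.
Variables (T : finType) (s : {perm T}).
Implicit Types (A B : {set T}) (P : pred T).

Lemma mem_imset_perm A x : (s x \in s @: A) = (x \in A).
Proof. exact/mem_imset/perm_inj. Qed.

Lemma imset_permK A : (s^-1)%g @: (s @: A) = A.
Proof. by rewrite -imset_comp (eq_imset _ (permK s)) imset_id. Qed.

Lemma imset_permKV A : s @: ((s^-1)%g @: A) = A.
Proof. by rewrite -imset_comp (eq_imset _ (permKV s)) imset_id. Qed.

Lemma imset_perm_inj : injective (fun A => s @: A).
Proof. exact/imset_inj/perm_inj. Qed.

Lemma imset_perm_eq A B : (s @: A == s @: B) = (A == B).
Proof. exact: (inj_eq imset_perm_inj). Qed.

Lemma imset_perm_subset A B : (s @: A \subset s @: B) = (A \subset B).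
Proof.
apply/idP/idP; last exact: imsetS.
by move/(imsetS (s^-1)%g); rewrite !imset_permK.
Qed.

Lemma imset_permD A B : s @: (A :\: B) = s @: A :\: s @: B.
Proof.
apply/setP => y; rewrite -[y](permKV s) mem_imset_perm !inE !mem_imset_perm.
by rewrite -inE.
Qed.

Lemma imset_permT : s @: [set: T] = [set: T].
Proof. by apply/setP => y; rewrite -[y](permKV s) mem_imset_perm !inE. Qed.

Lemma mem_imset_perm_set (S : {set {set T}}) A :
  (s @: A \in [set s @: C | C : {set T} in S]) = (A \in S).
Proof. exact/mem_imset/imset_perm_inj. Qed.

Lemma forall_in_imset_perm A P : [forall x in s @: A, P x] = [forall x in A, P (s x)].
Proof.
apply/forall_inP/forall_inP => H x; first by move=> xA; apply: H; rewrite mem_imset_perm.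
by case/imsetP=> y yA ->; apply: H.
Qed.

Lemma forall_set_imset_perm (Q : pred {set T}) :
  [forall A : {set T}, Q A] = [forall A : {set T}, Q (s @: A)].
Proof.
apply/forallP/forallP => H A; first exact: H.
by rewrite -(imset_permKV A); apply: H.
Qed.

Lemma connect_perm (r r' : rel T) : (forall x y, r' (s x) (s y) = r x y) ->
  forall x y, connect r' (s x) (s y) = connect r x y.
Proof.
have connect_map (r1 r2 : rel T) (f : {perm T}) :
    (forall x y, r2 (f x) (f y) = r1 x y) ->
    forall x y, connect r1 x y -> connect r2 (f x) (f y).
  move=> hf x _ /connectP[q q_path ->]; apply/connectP; exists (map f q).
    by rewrite (@map_path _ _ f r2 r1 pred0) //; apply/hasPn.
  by rewrite last_map.
move=> hr x y; apply/idP/idP; last exact: connect_map.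
move/(connect_map r' r (s^-1)%g); rewrite !permK; apply=> u v.
by rewrite -hr !permKV.
Qed.

End PermImage.

Section Transport.
Variables (V : finType) (e : rel V) (s : {perm V}).
Hypothesis s_aut : forall x y, e (s x) (s y) = e x y.
Implicit Types (A M N : {set V}).

Lemma is_module_imset A M : is_module e (s @: A) (s @: M) = is_module e A M.
Proof.
rewrite /is_module imset_perm_subset imset_eq0 -imset_permD forall_in_imset_perm.
congr [&& _, _ & _]; apply: eq_forallb => x; rewrite !forall_in_imset_perm.
by congr (_ ==> (_ || _)); apply: eq_forallb => y; rewrite s_aut.
Qed.

Lemma is_prime_imset A : is_prime e (s @: A) = is_prime e A.
Proof.
rewrite /is_prime (forall_set_imset_perm s); apply: eq_forallb => M.
by rewrite is_module_imset /trivial_module imset_perm_eq card_imset //; apply: perm_inj.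
Qed.

Lemma is_degenerate_imset A : is_degenerate e (s @: A) = is_degenerate e A.
Proof.
rewrite /is_degenerate !forall_in_imset_perm.
congr (_ || _); apply: eq_forallb => x; rewrite forall_in_imset_perm;
  congr (_ ==> _); apply: eq_forallb => y; rewrite s_aut //.
by rewrite (inj_eq perm_inj).
Qed.

Lemma adjA_perm A x y : adjA e (s @: A) (s x) (s y) = adjA e A x y.
Proof. by rewrite /adjA !mem_imset_perm s_aut. Qed.

Lemma coadjA_perm A x y : coadjA e (s @: A) (s x) (s y) = coadjA e A x y.
Proof. by rewrite /coadjA !mem_imset_perm s_aut (inj_eq perm_inj). Qed.

Section Relation.
Variables (r r' : rel V).
Hypothesis r_perm : forall x y, r' (s x) (s y) = r x y.

Lemma rconnected_imset A : rconnected (s @: A) r' = rconnected A r.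
Proof.
rewrite /rconnected forall_in_imset_perm; apply: eq_forallb => x.
rewrite forall_in_imset_perm; congr (_ ==> _); apply: eq_forallb => y.
by rewrite (connect_perm r_perm).
Qed.

Lemma rcomponents_imset A :
  rcomponents (s @: A) r' = [set s @: C | C : {set V} in rcomponents A r].
Proof.
rewrite /rcomponents -!imset_comp; apply: eq_imset => x /=.
apply/setP => y; rewrite -[y](permKV s) mem_imset_perm !inE mem_imset_perm.
by rewrite (connect_perm r_perm).
Qed.

End Relation.

Lemma max_proper_modules_imset A :
  max_proper_modules e (s @: A) = [set s @: M | M : {set V} in max_proper_modules e A].
Proof.
apply/setP => M'; rewrite -(imset_permKV s M') mem_imset_perm_set !inE.
rewrite /proper_module is_module_imset imset_perm_eq; congr (_ && _).
rewrite (forall_set_imset_perm s); apply: eq_forallb => N.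
by rewrite is_module_imset !imset_perm_eq imset_perm_subset.
Qed.

Lemma children_imset A : children e (s @: A) = [set s @: C | C : {set V} in children e A].
Proof.
rewrite /children is_prime_imset is_degenerate_imset.
rewrite (rconnected_imset (adjA_perm A)) (rconnected_imset (coadjA_perm A)).
case: ifP => _; first by rewrite imset0.
case: ifP => _; first exact: max_proper_modules_imset.
by case: ifP => _; apply: rcomponents_imset; [apply: adjA_perm | apply: coadjA_perm].
Qed.

Lemma nodes_imset M : M \in nodes e -> s @: M \in nodes e.
Proof.
rewrite /nodes /fixset; elim: #|_| M => [|k IHk] M /=; first by rewrite inE.
case/setU1P => [->|/bigcupP[A HA MA]]; first by rewrite imset_permT setU11.
apply/setU1P; right; apply/bigcupP; exists (s @: A); first exact: IHk.
by rewrite children_imset mem_imset_perm_set.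
Qed.

Lemma is_leaf_imset M : is_leaf e (s @: M) = is_leaf e M.
Proof. by rewrite /is_leaf children_imset imset_eq0. Qed.

Lemma adjacent_modules_imset M N :
  adjacent_modules e (s @: M) (s @: N) = adjacent_modules e M N.
Proof.
rewrite /adjacent_modules forall_in_imset_perm; apply: eq_forallb => x.
by rewrite forall_in_imset_perm; congr (_ ==> _); apply: eq_forallb => y; rewrite s_aut.
Qed.

End Transport.
Section Decomposition.
Variables (V : finType) (e : rel V).
Hypothesis e_sym : symmetric e.
Implicit Types (A B C D M N : {set V}) (r : rel V).

Lemma is_moduleP A M :
  reflect [/\ M \subset A, M != set0 &
           forall x y y', x \in A :\: M -> y \in M -> y' \in M -> e x y = e x y']
          (is_module e A M).
Proof.
apply: (iffP and3P) => -[sMA M0 H]; split=> //.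
  move=> x y y' /(forall_inP H) /orP[] /forall_inP exM yM y'M; first by rewrite !exM.
  by rewrite (negbTE (exM _ yM)) (negbTE (exM _ y'M)).
apply/forall_inP => x xAM; have [y yM] := set0Pn _ M0.
by case: (boolP (e x y)) => exy; apply/orP; [left | right];
  apply/forall_inP => y' y'M; rewrite (H x y' y) ?exy.
Qed.

Lemma is_module_set1 A x : x \in A -> is_module e A [set x].
Proof.
move=> xA; apply/is_moduleP; split; first by rewrite sub1set.
  by apply/set0Pn; exists x; rewrite inE.
by move=> w y y' _ /set1P-> /set1P->.
Qed.

Lemma is_moduleU A M N :
  is_module e A M -> is_module e A N -> ~~ [disjoint M & N] -> is_module e A (M :|: N).
Proof.
move=> /is_moduleP[sMA _ uM] /is_moduleP[sNA _ uN] /pred0Pn[z /andP[/= zM zN]].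
apply/is_moduleP; split; first by rewrite subUset sMA sNA.
  by apply/set0Pn; exists z; rewrite inE zM.
have uMN x y : x \in A :\: (M :|: N) -> y \in M :|: N -> e x y = e x z.
  rewrite !inE negb_or => /andP[/andP[xM xN] xA] /orP[] yM.
    by apply: uM; rewrite ?inE ?xM.
  by apply: uN; rewrite ?inE ?xN.
by move=> x y y' xAMN yMN y'MN; rewrite !uMN.
Qed.

Lemma disjoint_modules_adjacent A C D x y :
  is_module e A C -> is_module e A D -> [disjoint C & D] ->
  x \in C -> y \in D -> e x y -> adjacent_modules e C D.
Proof.
move=> /is_moduleP[sCA _ uC] /is_moduleP[sDA _ uD] CD xC yD exy.
have outC w : w \in D -> w \in A :\: C.
  by move=> wD; rewrite inE (subsetP sDA) // andbT (disjointFl CD).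
have outD w : w \in C -> w \in A :\: D.
  by move=> wC; rewrite inE (subsetP sCA) // andbT (disjointFr CD).
apply/forall_inP => x' x'C; apply/forall_inP => y' y'D.
by rewrite e_sym (uC y' x' x) ?outC // e_sym (uD x y' y) ?outD.
Qed.

Lemma overlapping_modules_uniform A M N p0 q0 z :
  is_module e A M -> is_module e A N ->
  p0 \in M :\: N -> q0 \in N :\: M -> z \in M :&: N ->
  forall p w, p \in M :\: N -> w \in N -> e p w = e p0 z.
Proof.
move=> /is_moduleP[sMA _ uM] /is_moduleP[sNA _ uN].
have inA (B : {set V}) v : B \subset A -> v \in B -> v \in A by move/subsetP; apply.
move=> /setDP[p0M p0N] /setDP[q0N q0M] /setIP[zM zN] p w /setDP[pM pN] wN.
have outN v : v \in M -> v \notin N -> v \in A :\: N.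
  by rewrite inE => vM ->; apply: inA vM.
have q0AM : q0 \in A :\: M by rewrite inE q0M (inA _ _ sNA q0N).
rewrite (uN p w q0) ?outN // e_sym (uM q0 p p0) // e_sym (uN p0 q0 z) ?outN //.
Qed.

Lemma cut_not_rconnected A B r x y :
  (forall u w, r u w -> w \in A) -> B \subset A ->
  (forall u w, u \in B -> w \in A :\: B -> ~~ r u w) ->
  x \in B -> y \in A :\: B -> ~~ rconnected A r.
Proof.
move=> rA sBA cut xB /setDP[yA yB].
apply/negP => /forall_inP/(_ x (subsetP sBA x xB))/forall_inP/(_ y yA)/connectP[q].
elim: q x xB => [|w q IHq] x xB /=; first by move=> _ eq_yx; rewrite eq_yx xB in yB.
case/andP=> rxw; have wA := rA x w rxw; apply: IHq; apply: contraT => wB.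
by move: rxw; rewrite (negbTE (cut x w xB _)) // inE wB wA.
Qed.

Lemma adjA_sym A : symmetric (adjA e A).
Proof. by move=> x y; rewrite /adjA e_sym andbCA. Qed.

Lemma coadjA_sym A : symmetric (coadjA e A).
Proof. by move=> x y; rewrite /coadjA e_sym eq_sym andbCA. Qed.

Section Components.
Variables (A : {set V}) (r : rel V).
Hypothesis r_sym : symmetric r.

Lemma rcomponents_sub C : C \in rcomponents A r -> C \subset A.
Proof. by case/imsetP => x _ ->; apply/subsetP => y; rewrite inE => /andP[]. Qed.

Lemma rcomponents_cover x : x \in A -> exists2 C, C \in rcomponents A r & x \in C.
Proof.
move=> xA; exists [set y in A | connect r x y]; first exact: imset_f.
by rewrite inE xA connect0.
Qed.

Lemma rcomponents_eq C D z :
  C \in rcomponents A r -> D \in rcomponents A r -> z \in C -> z \in D -> C = D.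
Proof.
have r_csym := sym_connect_sym r_sym.
case/imsetP => x _ -> /imsetP[y _ ->]; rewrite !inE => /andP[_ xz] /andP[_ yz].
apply/setP => w; rewrite !inE; congr (_ && _); apply/idP/idP => H.
  by apply: connect_trans yz (connect_trans _ H); rewrite r_csym.
by apply: connect_trans xz (connect_trans _ H); rewrite r_csym.
Qed.

Lemma rcomponents_proper C : ~~ rconnected A r -> C \in rcomponents A r -> C != A.
Proof.
move=> nconn /imsetP[x xA ->]; apply: contra nconn => /eqP HC.
have r_csym := sym_connect_sym r_sym.
apply/forall_inP => y yA; apply/forall_inP => z zA.
move: (yA) (zA); rewrite -{1 2}HC !inE => /andP[_ xy] /andP[_ xz].
by apply: connect_trans xz; rewrite r_csym.
Qed.

Lemma rcomponents_module (b : bool) C :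
  {in A &, forall x y, x != y -> r x y = (e x y == b)} ->
  C \in rcomponents A r -> is_module e A C.
Proof.
move=> rE HC; have sCA := rcomponents_sub HC.
case/imsetP: HC => z zA defC; apply/is_moduleP; split=> //.
  by apply/set0Pn; exists z; rewrite defC inE zA connect0.
have out x y : x \in A :\: C -> y \in C -> e x y = ~~ b.
  rewrite defC !inE => /andP[xzC xA] /andP[yA zy].
  have yx : y != x by apply: contraNneq xzC => <-; rewrite yA.
  suff : e y x != b by rewrite [e x y]e_sym; case: (e y x); case: (b).
  rewrite -(rE _ _ yA xA yx); apply: contra xzC => ryx.
  by rewrite xA (connect_trans zy) // connect1.
by move=> x y y' xAC yC y'C; rewrite !out.
Qed.

End Components.

Lemma in_max_proper_modules A M :
  (M \in max_proper_modules e A) = maxset (proper_module e A) M.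
Proof.
rewrite inE; apply/andP/maxsetP => -[pM maxM]; split=> //.
  by move=> N pN sMN; apply/eqP; move/implyP: (forallP maxM N); apply; rewrite pN.
by apply/forallP => N; apply/implyP => /andP[pN sMN]; rewrite (maxM N pN sMN).
Qed.

Lemma max_proper_modules_cover A x :
  ~~ is_prime e A -> x \in A -> exists2 M, M \in max_proper_modules e A & x \in M.
Proof.
case/forallPn => M0; rewrite negb_imply /trivial_module negb_or.
case/and3P=> mM0 M0A cardM0 xA.
have [sM0A M00 _] := is_moduleP _ _ mM0.
have px : proper_module e A [set x].
  rewrite /proper_module is_module_set1 //=; apply: contra cardM0 => /eqP Ax.
  by move: sM0A M00; rewrite -Ax subset1 => /orP[] /eqP->; rewrite ?cards1 ?eqxx.
have [M maxM] := maxset_exists px.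
by rewrite sub1set => xM; exists M; rewrite ?in_max_proper_modules.
Qed.

Lemma max_proper_modules_eq A M N z :
  rconnected A (adjA e A) -> rconnected A (coadjA e A) ->
  M \in max_proper_modules e A -> N \in max_proper_modules e A ->
  z \in M -> z \in N -> M = N.
Proof.
rewrite !in_max_proper_modules => conn coconn maxM maxN zM zN.
have /andP[mM MA] := maxsetp maxM; have /andP[mN NA] := maxsetp maxN.
case: (boolP (M \subset N)) => [sMN|/subsetPn[p0 p0M p0N]].
  by rewrite (maxsetsup maxM _ sMN) // /proper_module mN.
case: (boolP (N \subset M)) => [sNM|/subsetPn[q0 q0N q0M]].
  by rewrite (maxsetsup maxN _ sNM) // /proper_module mM.
have MNz : z \in M :&: N by rewrite inE zM.
have mMN : is_module e A (M :|: N).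
  by apply: is_moduleU => //; apply/pred0Pn; exists z; rewrite /= zM.
have UA : M :|: N = A.
  apply: contraTeq q0M => UA; apply/negPn.
  by rewrite -(maxsetsup maxM _ (subsetUl M N)) ?inE ?q0N ?orbT // /proper_module mMN.
have [sMA _ _] := is_moduleP _ _ mM.
have ANM : A :\: (M :\: N) = N.
  by apply/setP => w; rewrite -UA !inE; case: (w \in N); case: (w \in M).
have p0MN : p0 \in M :\: N by rewrite inE p0M p0N.
have q0NM : q0 \in N :\: M by rewrite inE q0N q0M.
have uniform := overlapping_modules_uniform mM mN p0MN q0NM MNz.
have zAMN : z \in A :\: (M :\: N) by rewrite ANM.
have sMNA : M :\: N \subset A by rewrite (subset_trans (subsetDl M N)).
case b: (e p0 z).
- suff : ~~ rconnected A (coadjA e A) by rewrite coconn.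
  apply: (cut_not_rconnected _ sMNA _ p0MN zAMN); first by move=> u w /and4P[].
  by move=> u w uMN; rewrite ANM /coadjA => wN; rewrite (uniform u w) // b !andbF.
- suff : ~~ rconnected A (adjA e A) by rewrite conn.
  apply: (cut_not_rconnected _ sMNA _ p0MN zAMN); first by move=> u w /and3P[].
  by move=> u w uMN; rewrite ANM /adjA => wN; rewrite (uniform u w) // b !andbF.
Qed.

Lemma children_proper_module A C :
  C \in children e A -> [/\ C \subset A, C != A & is_module e A C].
Proof.
rewrite /children; case: ifP => _; first by rewrite inE.
case: ifP => [_ | nconn].
  by rewrite in_max_proper_modules => /maxsetp/andP[mC CA]; case/is_moduleP: (mC).
case: ifP => [nadj | /negbFE adj] HC.
  split; first exact: rcomponents_sub HC.
    exact: (rcomponents_proper (@adjA_sym A) nadj HC).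
  apply: (rcomponents_module (b := true) _ HC) => x y xA yA _.
  by rewrite /adjA xA yA eqb_id.
have ncoadj : ~~ rconnected A (coadjA e A) by move: nconn; rewrite adj => /negbT.
split; first exact: rcomponents_sub HC.
  exact: (rcomponents_proper (@coadjA_sym A) ncoadj HC).
apply: (rcomponents_module (b := false) _ HC) => x y xA yA xy.
by rewrite /coadjA xA yA xy eqbF_neg.
Qed.

Lemma children_card_lt A C : C \in children e A -> #|C| < #|A|.
Proof.
by case/children_proper_module => sCA CA _; apply: proper_card; rewrite properEneq CA.
Qed.

Lemma children_eq A C D z :
  C \in children e A -> D \in children e A -> z \in C -> z \in D -> C = D.
Proof.
rewrite /children; case: ifP => _; first by rewrite inE.
case: ifP => [/andP[conn coconn] | _]; first exact: max_proper_modules_eq.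
by case: ifP => _; apply: rcomponents_eq; [apply: adjA_sym | apply: coadjA_sym].
Qed.

Lemma children_cover A x :
  ~~ is_leaf e A -> x \in A -> exists2 C, C \in children e A & x \in C.
Proof.
rewrite /is_leaf /children; case: ifP => [_ | /norP[nprime _]]; first by rewrite eqxx.
case: ifP => _ _ xA; first exact: max_proper_modules_cover.
by case: ifP => _; apply: rcomponents_cover.
Qed.

Lemma cover_children A : ~~ is_leaf e A -> cover (children e A) = A.
Proof.
move=> nleafA; apply/eqP; rewrite eqEsubset; apply/andP; split.
  by apply/bigcupsP => C /children_proper_module[].
apply/subsetP => x xA; have [C HC xC] := children_cover nleafA xA.
by apply/bigcupP; exists C.
Qed.

Lemma children_adjacent A C D x y :
  C \in children e A -> D \in children e A -> C != D ->
  x \in C -> y \in D -> e x y -> adjacent_modules e C D.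
Proof.
move=> HC HD CD; have [_ _ mC] := children_proper_module HC.
have [_ _ mD] := children_proper_module HD.
apply: disjoint_modules_adjacent mC mD _; apply/pred0P => z /=.
by apply/andP => -[zC zD]; move/eqP: CD; apply; apply: children_eq HC HD zC zD.
Qed.

Lemma nodesE : nodes e = setT |: \bigcup_(A in nodes e) children e A.
Proof.
have mono : {homo (fun S : {set {set V}} => setT |: \bigcup_(A in S) children e A) :
                 S1 S2 / S1 \subset S2}.
  move=> S1 S2 sS12; apply/setUS/bigcupsP => A AS1.
  by apply: (bigcup_max A) => //; apply: (subsetP sS12).
by rewrite /nodes (fixsetK mono).
Qed.

Lemma setT_in_nodes : [set: V] \in nodes e.
Proof. by rewrite nodesE setU11. Qed.

Lemma children_in_nodes A C : A \in nodes e -> C \in children e A -> C \in nodes e.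
Proof. by move=> HA HC; rewrite nodesE; apply/setU1P; right; apply/bigcupP; exists A. Qed.

Lemma children_neq_setT A C : C \in children e A -> C != setT.
Proof.
case/children_proper_module => sCA CA _; apply: contra CA => /eqP CT.
by rewrite eqEsubset sCA CT subsetT.
Qed.

Lemma separation A x y : A \in nodes e -> x \in A -> y \in A ->
  (exists2 L, L \in nodes e & [&& is_leaf e L, x \in L & y \in L]) \/
  (exists A' C D, [/\ A' \in nodes e, C \in children e A', D \in children e A',
                      C != D & (x \in C) && (y \in D)]).
Proof.
have [n] := ubnP #|A|; elim: n A => // n IHn A /ltnSE leAn HA xA yA.
have [leafA | nleafA] := boolP (is_leaf e A); first by left; exists A; rewrite ?leafA ?xA.
have [C HC xC] := children_cover nleafA xA; have [D HD yD] := children_cover nleafA yA.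
have [eqCD | CD] := eqVneq C D; last by right; exists A, C, D; rewrite xC yD.
rewrite -{}eqCD in HD yD.
apply: (IHn C); rewrite ?(children_in_nodes HA HC) //.
exact: leq_trans (children_card_lt HC) leAn.
Qed.

Lemma node_eq_imset (s : {perm V}) M N :
  children e N = [set s @: C | C : {set V} in children e M] ->
  (forall v, (is_leaf e M && (v \in M)) = (is_leaf e N && (s v \in N))) ->
  N = s @: M.
Proof.
move=> chN leafMN; have leafN : is_leaf e N = is_leaf e M by rewrite /is_leaf chN imset_eq0.
have [leafM | nleafM] := boolP (is_leaf e M).
  apply/setP => y; rewrite -[y](permKV s) mem_imset_perm.
  by have := leafMN ((s^-1)%g y); rewrite leafM leafN leafM.
rewrite -(cover_children nleafM) -[LHS]cover_children ?leafN // chN cover_imset.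
by rewrite /cover (big_morph _ (imsetU s) (imset0 s)).
Qed.

End Decomposition.

Section TreeAutomorphismsOfGraphAutomorphisms.
Variables (V : finType) (e : rel V).
Implicit Types (s : {perm V}) (M : {set V}).

Lemma AutXP s : reflect (forall x y, e (s x) (s y) = e x y) (s \in AutX e).
Proof.
rewrite inE; apply: (iffP forallP) => H x; last by apply/forallP => y; rewrite H.
by move=> y; apply/eqP; apply: (forallP (H x) y).
Qed.

Lemma AutX_inv s : s \in AutX e -> (s^-1)%g \in AutX e.
Proof. by move/AutXP=> s_aut; apply/AutXP => x y; rewrite -s_aut !permKV. Qed.

Lemma AutX_mul s t : s \in AutX e -> t \in AutX e -> (s * t)%g \in AutX e.
Proof.
by move=> /AutXP s_aut /AutXP t_aut; apply/AutXP => x y; rewrite !permM t_aut s_aut.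
Qed.

Lemma nodes_imsetE s M : s \in AutX e -> (s @: M \in nodes e) = (M \in nodes e).
Proof.
move=> sA; apply/idP/idP; first rewrite -{2}(imset_permK s M).
  by apply: nodes_imset; apply/AutXP/AutX_inv.
by apply: nodes_imset; apply/AutXP.
Qed.

Definition relabel s (t : V + ({set V} * bool)) : V + ({set V} * bool) :=
  match t with inl v => inl (s v) | inr (M, b) => inr (s @: M, b) end.

Lemma relabel_inj s : injective (relabel s).
Proof.
move=> [v|[M b]] [w|[N c]] //= [].
  by move/perm_inj->.
by move/imset_perm_inj=> -> ->.
Qed.

Section GraphAutomorphism.
Variable s : {perm V}.
Hypothesis sA : s \in AutX e.

Lemma tvalid_relabel t : tvalid e (relabel s t) = tvalid e t.
Proof.
by case: t => [v|[M b]] //=; rewrite nodes_imsetE // -{1}(imset_permT s) imset_perm_eq.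
Qed.

Lemma exists_nodes_imset (P : pred {set V}) :
  [exists L in nodes e, P (s @: L)] = [exists L in nodes e, P L].
Proof.
apply/exists_inP/exists_inP => -[L HL PL]; first by exists (s @: L); rewrite ?nodes_imsetE.
by exists ((s^-1)%g @: L); rewrite ?imset_permKV // -(nodes_imsetE _ sA) imset_permKV.
Qed.

Lemma nedge_raw_relabel t u : nedge_raw e (relabel s t) (relabel s u) = nedge_raw e t u.
Proof.
have s_aut := AutXP _ sA.
case: t => [v|[M []]]; case: u => [w|[N []]] //=;
  rewrite ?is_leaf_imset ?mem_imset_perm ?children_imset ?mem_imset_perm_set //.
  rewrite s_aut; congr (_ && _); rewrite -exists_nodes_imset.
  by apply: eq_existsb => L; rewrite is_leaf_imset ?mem_imset_perm.
rewrite imset_perm_eq adjacent_modules_imset //; congr (_ && (_ && _)).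
rewrite -exists_nodes_imset; apply: eq_existsb => L.
by rewrite children_imset // !mem_imset_perm_set.
Qed.

End GraphAutomorphism.

Definition autT_fun s (t : tvert e) : tvert e :=
  if s \in AutX e then insubd t (relabel s (val t)) else t.

Lemma autT_fun_val s t : s \in AutX e -> val (autT_fun s t) = relabel s (val t).
Proof.
move=> sA; have t_valid : tvalid e (relabel s (val t)) by rewrite tvalid_relabel ?(valP t).
by rewrite /autT_fun sA insubdK.
Qed.

Lemma autT_fun_inj s : injective (autT_fun s).
Proof.
case sA: (s \in AutX e); last by move=> t u; rewrite /autT_fun sA.
by move=> t u /(congr1 val); rewrite !autT_fun_val // => /relabel_inj/val_inj.
Qed.

Definition autT_of s : {perm tvert e} := perm (@autT_fun_inj s).

Lemma autT_of_val s t : s \in AutX e -> val (autT_of s t) = relabel s (val t).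
Proof. by move=> sA; rewrite permE autT_fun_val. Qed.

Lemma autT_of_AutT s : s \in AutX e -> autT_of s \in AutT e.
Proof.
move=> sA; rewrite inE; apply/andP; split.
  by apply/forallP => t; rewrite /is_normal autT_of_val //; case: (val t) => [v|[M b]].
apply/forallP => t; apply/forallP => u.
rewrite /tnedge /ttedge !autT_of_val // nedge_raw_relabel // eqxx /=.
by case: (val t) => [v|[M []]]; case: (val u) => [w|[N []]] //=; rewrite imset_perm_eq.
Qed.

Lemma autT_ofM s t : s \in AutX e -> t \in AutX e ->
  autT_of (s * t) = (autT_of s * autT_of t)%g.
Proof.
move=> sA tA; apply/permP => u; apply: val_inj.
rewrite permM !autT_of_val ?AutX_mul //.
case: (val u) => [v|[M b]] /=; first by rewrite permM.
by rewrite -imset_comp; congr (inr (_, b)); apply: eq_imset => x; apply: permM.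
Qed.

Lemma autT_of1 : autT_of 1%g = 1%g.
Proof.
have oneA : (1%g : {perm V}) \in AutX e by apply/AutXP => x y; rewrite !perm1.
apply/permP => u; apply: val_inj; rewrite autT_of_val // perm1.
case: (val u) => [v|[M b]] /=; first by rewrite perm1.
by rewrite (eq_imset _ (@perm1 _)) imset_id.
Qed.

End TreeAutomorphismsOfGraphAutomorphisms.

Section GraphAutomorphismsOfTreeAutomorphisms.
Variables (V : finType) (e : rel V).
Hypothesis e_sym : symmetric e.
Implicit Types (p : {perm tvert e}) (t u : tvert e) (M N : {set V}).

Notation inner_node M := ((M \in nodes e) && (M != setT)).

Lemma AutT_normal p t : p \in AutT e -> is_normal (p t) = is_normal t.
Proof. by rewrite inE => /andP[/forallP H _]; apply/eqP. Qed.

Lemma AutT_tnedge p t u : p \in AutT e -> tnedge (p t) (p u) = tnedge t u.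
Proof. by rewrite inE => /andP[_ /forallP/(_ t)/forallP/(_ u)/andP[/eqP]]. Qed.

Lemma AutT_ttedge p t u : p \in AutT e -> ttedge (p t) (p u) = ttedge t u.
Proof. by rewrite inE => /andP[_ /forallP/(_ t)/forallP/(_ u)/andP[_ /eqP]]. Qed.

Lemma AutT_inv p : p \in AutT e -> (p^-1)%g \in AutT e.
Proof.
move=> pA; rewrite inE; apply/andP; split.
  by apply/forallP => t; rewrite -(AutT_normal _ pA) permKV.
apply/forallP => t; apply/forallP => u.
by rewrite -(AutT_tnedge _ _ pA) -(AutT_ttedge _ _ pA) !permKV !eqxx.
Qed.

Definition normal_vertex (v : V) : tvert e := Sub (inl v) isT.

Definition marker M (b : bool) (HM : inner_node M) : tvert e := Sub (inr (M, b)) HM.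

Lemma children_inner_node M C : M \in nodes e -> C \in children e M -> inner_node C.
Proof. by move=> HM HC; rewrite (children_in_nodes HM HC) (children_neq_setT e_sym HC). Qed.

Definition autX_fun p (v : V) : V :=
  if p \in AutT e then (if val (p (normal_vertex v)) is inl w then w else v) else v.

Lemma autX_fun_val p v : p \in AutT e -> val (p (normal_vertex v)) = inl (autX_fun p v).
Proof.
move=> pA; rewrite /autX_fun pA; case E: (val (p (normal_vertex v))) => [w|[M b]] //.
by have := AutT_normal (normal_vertex v) pA; rewrite /is_normal E.
Qed.

Lemma autX_fun_inj p : injective (autX_fun p).
Proof.
case pA: (p \in AutT e); last by move=> v w; rewrite /autX_fun pA.
move=> v w evw; have : val (p (normal_vertex v)) = val (p (normal_vertex w)).
  by rewrite !autX_fun_val // evw.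
by move/val_inj/perm_inj/(congr1 val) => [].
Qed.

Definition autX_of p : {perm V} := perm (@autX_fun_inj p).

Lemma autX_of_val p v : p \in AutT e -> val (p (normal_vertex v)) = inl (autX_of p v).
Proof. by move=> pA; rewrite permE autX_fun_val. Qed.

Section TreeAutomorphism.
Variable p : {perm tvert e}.
Hypothesis pA : p \in AutT e.
Local Notation s := (autX_of p).

Lemma autT_normal_vertex v : p (normal_vertex v) = normal_vertex (s v).
Proof. by apply: val_inj; rewrite autX_of_val. Qed.

(* Tree edges join [m_M] to [m_M'] only, so [p] maps such a pair to a pair. *)
Lemma autT_marker_pair M (HM : inner_node M) :
  exists N (HN : inner_node N),
    p (marker false HM) = marker false HN /\ p (marker true HM) = marker true HN.
Proof.
have := AutT_ttedge (marker false HM) (marker true HM) pA.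
rewrite {2}/ttedge /= eqxx /ttedge.
case Ef: (val (p (marker false HM))) => [//|[M' []//]].
case Et: (val (p (marker true HM))) => [//|[N []//]] /eqP eqM'N.
have HN : inner_node N by move: (valP (p (marker true HM))); rewrite Et.
by exists N, HN; split; apply: val_inj; rewrite /= ?Ef ?Et ?eqM'N.
Qed.

Lemma autT_children_markers M N (HM : inner_node M) (HN : inner_node N) :
  p (marker true HM) = marker true HN ->
  (forall C (HC : inner_node C), C \in children e M ->
     val (p (marker false HC)) = inr (s @: C, false)) ->
  children e N = [set s @: C | C : {set V} in children e M].
Proof.
move=> pM pC; have /andP[M_node _] := HM; have /andP[N_node _] := HN.
apply/setP => D; apply/idP/imsetP => [DN | [C CM ->]].
  have HD := children_inner_node N_node DN.
  set u := (p^-1)%g (marker false HD); have pu : p u = marker false HD by rewrite permKV.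
  have := AutT_tnedge (marker true HM) u pA; have := AutT_normal u pA.
  rewrite pu pM /tnedge /is_normal /= DN.
  case Eu: (val u) => [//|[C []//]] _ /esym CM; exists C => //.
  have HC := children_inner_node M_node CM.
  have equ : u = marker false HC by apply: val_inj.
  by move: (pC C HC CM); rewrite -equ pu => -[->].
have HC := children_inner_node M_node CM.
have := AutT_tnedge (marker true HM) (marker false HC) pA.
by rewrite pM /tnedge /= pC // CM.
Qed.

Lemma autT_marker_true M (HM : inner_node M) :
  val (p (marker true HM)) = inr (s @: M, true).
Proof.
have [n] := ubnP #|M|; elim: n M HM => // n IHn M HM /ltnSE leMn.
have [N [HN [_ pM]]] := autT_marker_pair HM.
have pC C (HC : inner_node C) : C \in children e M ->
    val (p (marker false HC)) = inr (s @: C, false).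
  move=> CM; have [N' [HN' [-> pCt]]] := autT_marker_pair HC.
  by move: (IHn C HC (leq_trans (children_card_lt e_sym CM) leMn)); rewrite pCt => -[<-].
rewrite pM /=; congr (inr (_, true)); apply: (node_eq_imset e_sym).
  exact: autT_children_markers pM pC.
move=> v; have := AutT_tnedge (marker true HM) (normal_vertex v) pA.
by rewrite pM autT_normal_vertex.
Qed.

Lemma autT_marker_false M (HM : inner_node M) :
  val (p (marker false HM)) = inr (s @: M, false).
Proof.
have [N [HN [-> pM]]] := autT_marker_pair HM.
by move: (autT_marker_true HM); rewrite pM => -[<-].
Qed.

Lemma autX_of_edge x y : e x y -> e (s x) (s y).
Proof.
move=> exy; have [[L HL /and3P[leafL xL yL]] | [A [C [D]]]] :=
  separation e_sym (setT_in_nodes e) (in_setT x) (in_setT y).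
  have : tnedge (normal_vertex x) (normal_vertex y).
    by rewrite /tnedge /= exy; apply/exists_inP; exists L; rewrite ?leafL ?xL.
  by rewrite -(AutT_tnedge _ _ pA) !autT_normal_vertex /tnedge /= => /andP[].
case=> HA CA DA CD /andP[xC yD].
have HC := children_inner_node HA CA; have HD := children_inner_node HA DA.
have : tnedge (marker false HC) (marker false HD).
  rewrite /tnedge /= CD (children_adjacent e_sym CA DA CD xC yD exy) andbT.
  by apply/exists_inP; exists A; rewrite ?CA.
rewrite -(AutT_tnedge _ _ pA) /tnedge !autT_marker_false /= => /and3P[_ _].
by move/forall_inP/(_ _ (imset_f _ xC))/forall_inP/(_ _ (imset_f _ yD)).
Qed.

End TreeAutomorphism.

Lemma autX_ofK p v : p \in AutT e -> autX_of (p^-1)%g (autX_of p v) = v.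
Proof.
move=> pA; have : val ((p^-1)%g (normal_vertex (autX_of p v))) = inl v.
  by rewrite -(autT_normal_vertex pA) permK.
by rewrite autX_of_val ?AutT_inv // => -[].
Qed.

Lemma autX_of_AutX p : p \in AutT e -> autX_of p \in AutX e.
Proof.
move=> pA; apply/AutXP => x y; apply/idP/idP; last exact: autX_of_edge.
by rewrite -{2}(autX_ofK x pA) -{2}(autX_ofK y pA); apply: (autX_of_edge (AutT_inv pA)).
Qed.

Lemma autT_ofK p : p \in AutT e -> autT_of e (autX_of p) = p.
Proof.
move=> pA; apply/permP => u; apply: val_inj; rewrite autT_of_val ?autX_of_AutX //.
case: u => [[v|[M []]] Hu] /=.
- have -> : exist _ (inl v) Hu = normal_vertex v by apply: val_inj.
  by rewrite autX_of_val.
- exact: esym (autT_marker_true pA Hu).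
- exact: esym (autT_marker_false pA Hu).
Qed.

Lemma autT_of_eq1 s : s \in AutX e -> (autT_of e s == 1%g) = (s == 1%g).
Proof.
move=> sA; apply/eqP/eqP => [s_triv | ->]; last exact: autT_of1.
apply/permP => v; rewrite perm1.
by have := autT_of_val (normal_vertex v) sA; rewrite s_triv perm1 => -[].
Qed.

End GraphAutomorphismsOfTreeAutomorphisms.

Theorem mainTheorem2 (V : finType) (e : rel V) :
  symmetric e -> irreflexive e -> AutX e \isog AutT e.
Proof.
move=> e_sym _; apply: (@misom_isog _ _ _ _ (@autT_of V e)); apply/andP; split.
  by apply/morphicP => s t sA tA; apply: autT_ofM.
apply/eqP/setP => p; apply/imsetP/setD1P => [[s /setD1P[s1 sA] ->] | [p1 pA]].
  by split; [rewrite autT_of_eq1 | apply: autT_of_AutT].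
have sA := autX_of_AutX e_sym pA.
exists (autX_of p); last by rewrite autT_ofK.
by apply/setD1P; rewrite -(autT_of_eq1 sA) autT_ofK.
Qed.
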